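(* Let $K_{\Delta p},K_{\Delta v},\lambda_1,\lambda_2,\gamma_{\Delta p},\gamma_{\Delta v}>0$ and $a,b\ge0$. For each $N\in\mathbb{N}$ consider states $\tilde\chi_i=(x_{1,i},x_{2,i},x_{3,i},x_{4,i})\in\mathbb{R}^4$, $i=0,\dots,N$, with $g_i:=a\psi^{i-1}_{\Delta p}+b\psi^{i-1}_{\Delta v}$ and dynamics $$\begin{aligned}\dot x_{1,i}&=x_{2,i},\\ \dot x_{2,i}&=-(x_{1,i}+x_{3,i})-K_{\Delta v}\big(x_{2,i}-\lambda_1x_{3,i}+x_{4,i}+K_{\Delta p}(x_{1,i}+x_{3,i})\big)+(K_{\Delta p}-\lambda_1)(\lambda_1x_{3,i}-x_{4,i})+\lambda_2x_{4,i}-K_{\Delta p}x_{2,i}-g_i,\\ \dot x_{3,i}&=-\lambda_1x_{3,i}+x_{4,i},\\ \dot x_{4,i}&=-\lambda_2x_{4,i}+g_i,\end{aligned}$$ where $\psi^{-1}_{\Delta p}=\psi^{-1}_{\Delta v}=0$ and, for $i\ge1$, with $m=i-1$, $$\psi^{m}_{\Delta p}=\gamma_{\Delta p}\,\mathrm{sign}\Big(\tfrac{1}{m+1}\textstyle\sum_{j=0}^{m}x_{1,j}\Big)\sqrt{\sigma^2_{1,m}},\qquad \psi^{m}_{\Delta v}=\gamma_{\Delta v}\,\mathrm{sign}\Big(\tfrac{1}{m+1}\textstyle\sum_{j=0}^{m}x_{2,j}\Big)\sqrt{\sigma^2_{2,m}},$$ $\sigma^2_{k,m}$ being the population variance of $x_{k,0},\dots,x_{k,m}$.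 (Here $x_{1,i}=\Delta p_i+\Delta\bar p$, $x_{2,i}=\Delta v_i$, $(x_{3,i},x_{4,i})=(\rho_{1,i},\rho_{2,i})$; this is the closed loop of the variable-spacing policy with reference distance $\Delta p^r_i=-\Delta\bar p-\rho_{1,i}$ and reference speed difference $\Delta v^r_i=\lambda_1\rho_{1,i}-\rho_{2,i}-K_{\Delta p}(\Delta p_i-\Delta p^r_i)$.) Assume solutions exist on $[0,\infty)$. Then: (1) the origin of each isolated subsystem (with $g_i$ replaced by $0$) is globally exponentially stable; (2) there exist $\beta^{vp}\in\mathcal{KL}$ and $\tilde\gamma^{vp}>0$ such that for every $N$, every solution, every $i$ and all $t\ge0$, $$|\tilde\chi_i(t)|\le\beta^{vp}(|\tilde\chi_i(0)|,t)+\tilde\gamma^{vp}\max_{j=0,\dots,i-1}\sup_{0\le\tau\le t}|\tilde\chi_j(\tau)|;$$ (3) there exist $a,b\ge0$ (not both zero) for which this holds with $\tilde\gamma^{vp}\in(0,1)$, and for such $a,b$ the origin of the interconnected system is Asymptotically String Stable.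
   Context: $|\cdot|$ is the Euclidean norm; $\mathrm{sign}$ takes values in $\{-1,0,1\}$. String Stability of the origin means: for every $\epsilon>0$ there exists $\delta>0$ such that for all $N\in\mathbb{N}$ and every solution, $\max_{i=0,\dots,N}|\tilde\chi_i(0)|<\delta$ implies $\max_{i=0,\dots,N}|\tilde\chi_i(t)|<\epsilon$ for all $t\ge0$. Asymptotic String Stability means String Stability together with: for all $N$, every solution satisfies $\lim_{t\to\infty}|\tilde\chi_i(t)|=0$ for all $i=0,\dots,N$. *)

From Stdlib Require Import Reals Lra.
From Coquelicot Require Import Coquelicot.
Open Scope R_scope.

Definition sgn (x : R) : R :=
  if Rlt_dec 0 x then 1 else if Rlt_dec x 0 then -1 else 0.

Definition mean (f : nat -> R) (m : nat) : R := sum_f_R0 f m / INR (m + 1).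
Definition pvar (f : nat -> R) (m : nat) : R :=
  sum_f_R0 (fun j => (f j - mean f m) ^ 2) m / INR (m + 1).

Definition psi (gam : R) (f : nat -> R) (m : nat) : R :=
  gam * sgn (mean f m) * sqrt (pvar f m).

Definition gterm (a b gdp gdv : R) (x1 x2 : nat -> R -> R) (i : nat) (t : R) : R :=
  match i with
  | O => 0
  | S m => a * psi gdp (fun j => x1 j t) m + b * psi gdv (fun j => x2 j t) m
  end.

Definition rhs2 (Kdp Kdv l1 l2 x1 x2 x3 x4 g : R) : R :=
  - (x1 + x3) - Kdv * (x2 - l1 * x3 + x4 + Kdp * (x1 + x3))
  + (Kdp - l1) * (l1 * x3 - x4) + l2 * x4 - Kdp * x2 - g.

Definition norm4 (y1 y2 y3 y4 : R) : R := sqrt (y1 ^ 2 + y2 ^ 2 + y3 ^ 2 + y4 ^ 2).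

Definition cont_nonneg (f : R -> R) : Prop :=
  forall t, 0 <= t ->
    filterlim f (within (fun s => 0 <= s) (locally t)) (locally (f t)).

Definition sol_on (f df : R -> R) : Prop :=
  cont_nonneg f /\ forall t, 0 < t -> is_derive f t (df t).

Definition isolated_sol (Kdp Kdv l1 l2 : R) (z1 z2 z3 z4 : R -> R) : Prop :=
  sol_on z1 z2 /\
  sol_on z2 (fun t => rhs2 Kdp Kdv l1 l2 (z1 t) (z2 t) (z3 t) (z4 t) 0) /\
  sol_on z3 (fun t => - l1 * z3 t + z4 t) /\
  sol_on z4 (fun t => - l2 * z4 t).

Definition platoon_sol (Kdp Kdv l1 l2 gdp gdv a b : R) (N : nat)
    (x1 x2 x3 x4 : nat -> R -> R) : Prop :=
  forall i, (i <= N)%nat ->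
    let g := gterm a b gdp gdv x1 x2 i in
    sol_on (x1 i) (x2 i) /\
    sol_on (x2 i) (fun t => rhs2 Kdp Kdv l1 l2 (x1 i t) (x2 i t) (x3 i t) (x4 i t) (g t)) /\
    sol_on (x3 i) (fun t => - l1 * x3 i t + x4 i t) /\
    sol_on (x4 i) (fun t => - l2 * x4 i t + g t).

Definition classK (al : R -> R) : Prop :=
  al 0 = 0 /\ cont_nonneg al /\
  (forall r s, 0 <= r -> r < s -> al r < al s).

Definition classKL (be : R -> R -> R) : Prop :=
  (forall t, 0 <= t -> classK (fun r => be r t)) /\
  (forall r, 0 <= r ->
     (forall s t, 0 <= s -> s <= t -> be r t <= be r s) /\
     is_lim (fun t => be r t) p_infty 0).

Definition isolated_GES (Kdp Kdv l1 l2 : R) : Prop :=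
  exists k lam, 0 < k /\ 0 < lam /\
    forall z1 z2 z3 z4, isolated_sol Kdp Kdv l1 l2 z1 z2 z3 z4 ->
    forall t, 0 <= t ->
      norm4 (z1 t) (z2 t) (z3 t) (z4 t)
      <= k * norm4 (z1 0) (z2 0) (z3 0) (z4 0) * exp (- lam * t).

(* The ISS-like estimate
     |chi_i(t)| <= beta(|chi_i(0)|, t) + gam * max_{j<i} sup_{[0,t]} |chi_j|,
   with the max over an empty index set equal to 0; the right-hand quantity
   "max sup" is expressed through its defining property: the estimate holds with
   any M >= 0 bounding all |chi_j(tau)|, j < i, 0 <= tau <= t. *)
Definition iss_estimate (Kdp Kdv l1 l2 gdp gdv a b : R) (Ggam : R -> Prop) : Prop :=
  exists (be : R -> R -> R) (gam : R), classKL be /\ Ggam gam /\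
    forall (N : nat) (x1 x2 x3 x4 : nat -> R -> R),
      platoon_sol Kdp Kdv l1 l2 gdp gdv a b N x1 x2 x3 x4 ->
      forall i, (i <= N)%nat -> forall t, 0 <= t ->
      forall M, 0 <= M ->
        (forall j tau, (j < i)%nat -> 0 <= tau -> tau <= t ->
           norm4 (x1 j tau) (x2 j tau) (x3 j tau) (x4 j tau) <= M) ->
        norm4 (x1 i t) (x2 i t) (x3 i t) (x4 i t)
        <= be (norm4 (x1 i 0) (x2 i 0) (x3 i 0) (x4 i 0)) t + gam * M.

Definition string_stable (Kdp Kdv l1 l2 gdp gdv a b : R) : Prop :=
  forall eps, 0 < eps -> exists delta, 0 < delta /\
    forall (N : nat) (x1 x2 x3 x4 : nat -> R -> R),
      platoon_sol Kdp Kdv l1 l2 gdp gdv a b N x1 x2 x3 x4 ->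
      (forall i, (i <= N)%nat -> norm4 (x1 i 0) (x2 i 0) (x3 i 0) (x4 i 0) < delta) ->
      forall i, (i <= N)%nat -> forall t, 0 <= t ->
        norm4 (x1 i t) (x2 i t) (x3 i t) (x4 i t) < eps.

Definition asympt_string_stable (Kdp Kdv l1 l2 gdp gdv a b : R) : Prop :=
  string_stable Kdp Kdv l1 l2 gdp gdv a b /\
  forall (N : nat) (x1 x2 x3 x4 : nat -> R -> R),
    platoon_sol Kdp Kdv l1 l2 gdp gdv a b N x1 x2 x3 x4 ->
    forall i, (i <= N)%nat ->
      is_lim (fun t => norm4 (x1 i t) (x2 i t) (x3 i t) (x4 i t)) p_infty 0.

(* For one vehicle, the error coordinates
       e = x1 + x3,    f = Kdp x1 + x2 + (Kdp - l1) x3 + x4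
   satisfy e' = -Kdp e + f and f' = -e - Kdv f: the coupling input g cancels
   from them and only drives the filter (x3, x4).  Hence the quadratic form
   V = e^2 + f^2 + x3^2 + w x4^2, w = 1 + 2/(l1 l2), obeys
   V' <= -mu V + (w/l2) g^2 (lyap_decrease), and a comparison principle
   (linear_comparison) plus the equivalence of V with |x|^2 gives
       |x(t)| <= A |x(0)| e^(-mu t / 2) + B sup |g|         (vehicle_estimate).
   With g = 0 this is part (1).  Each spacing term psi is bounded by twice its
   gain times the size of the predecessors' states (gterm_abs_le), which gives
   the ISS estimate with gain 2 B (a gdp + b gdv) (part (2)); taking a small
   and b = 0 makes the gain 1/2 (part (3)).  Finally an abstract small-gain
   argument for a finite cascade of time-invariant ISS systems
   (Section SmallGainCascade), applied through the time invariance of the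
   platoon (shift_platoon), turns any ISS estimate with gain < 1 into
   asymptotic string stability. *)

From Stdlib Require Import Reals Lra Lia.
From Coquelicot Require Import Coquelicot.
Open Scope R_scope.

Definition cont_at_nonneg (f : R -> R) (t : R) : Prop :=
  filterlim f (within (fun s => 0 <= s) (locally t)) (locally (f t)).

Lemma cont_at_nonneg_of_continuous (f : R -> R) (t : R) :
  continuous f t -> cont_at_nonneg f t.
Proof. intro Hf. exact (filterlim_filter_le_1 _ (filter_le_within _) Hf). Qed.

Lemma cont_at_nonneg_const (c t : R) : cont_at_nonneg (fun _ => c) t.
Proof. apply cont_at_nonneg_of_continuous, continuous_const. Qed.

Lemma cont_at_nonneg_plus (f g : R -> R) (t : R) :
  cont_at_nonneg f t -> cont_at_nonneg g t -> cont_at_nonneg (fun s => f s + g s) t.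
Proof. intros Hf Hg. exact (filterlim_comp_2 f g Rplus Hf Hg (filterlim_plus _ _)). Qed.

Lemma cont_at_nonneg_mult (f g : R -> R) (t : R) :
  cont_at_nonneg f t -> cont_at_nonneg g t -> cont_at_nonneg (fun s => f s * g s) t.
Proof. intros Hf Hg. exact (filterlim_comp_2 f g Rmult Hf Hg (filterlim_mult _ _)). Qed.

Lemma cont_at_nonneg_sq (f : R -> R) (t : R) :
  cont_at_nonneg f t -> cont_at_nonneg (fun s => f s ^ 2) t.
Proof.
  intro Hf. unfold cont_at_nonneg. replace (f t ^ 2) with (f t * f t) by ring.
  apply (filterlim_ext (fun s => f s * f s)); [intro; ring |].
  exact (cont_at_nonneg_mult f f t Hf Hf).
Qed.

Lemma is_derive_Rplus (f g : R -> R) (x df dg : R) :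
  is_derive f x df -> is_derive g x dg -> is_derive (fun s => f s + g s) x (df + dg).
Proof. exact (is_derive_plus f g x df dg). Qed.

Lemma is_derive_Rmult (f g : R -> R) (x df dg : R) :
  is_derive f x df -> is_derive g x dg ->
  is_derive (fun s => f s * g s) x (df * g x + f x * dg).
Proof. intros Hf Hg. exact (is_derive_mult f g x df dg Hf Hg Rmult_comm). Qed.

Lemma is_derive_sq (f : R -> R) (x d : R) :
  is_derive f x d -> is_derive (fun s => f s ^ 2) x (2 * f x * d).
Proof.
  intro Hf. apply (is_derive_ext (fun s => f s * f s)); [intro s; simpl; ring |].
  replace (2 * f x * d) with (d * f x + f x * d) by ring.
  exact (is_derive_Rmult f f x d d Hf Hf).
Qed.

Lemma is_derive_exp_lin (l x : R) : is_derive (fun s => exp (l * s)) x (l * exp (l * x)).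
Proof. auto_derive; [exact I | ]. ring. Qed.

Lemma nonincreasing_of_deriv_nonpos (f df : R -> R) (t : R) :
  0 <= t -> cont_at_nonneg f 0 ->
  (forall s, 0 < s -> is_derive f s (df s)) ->
  (forall s, 0 < s <= t -> df s <= 0) -> f t <= f 0.
Proof.
  intros Ht Hc Hd Hneg.
  destruct (Req_dec t 0) as [-> | Ht0]; [lra |].
  assert (Hmvt : forall e, 0 < e <= t -> f t <= f e).
  { intros e He. destruct (Req_dec e t) as [-> | Het]; [lra |].
    destruct (MVT_gen f e t df) as [c [Hc1 Hc2]].
    - intros x Hx. apply Hd. rewrite Rmin_left in Hx; lra.
    - intros x Hx. rewrite Rmin_left, Rmax_right in Hx by lra.
      apply continuity_pt_filterlim, (ex_derive_continuous (K := R_AbsRing) (V := R_NormedModule)).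
      eexists. apply Hd. lra.
    - rewrite Rmin_left, Rmax_right in Hc1 by lra.
      assert (df c <= 0) by (apply Hneg; lra). nra. }
  assert (Hright : filterlim f (at_right 0) (locally (f 0))).
  { refine (filterlim_filter_le_1 _ _ Hc).
    intros P [d Hd']. exists d. intros y Hy Hy0. apply Hd'; [exact Hy | lra]. }
  assert (Hev : at_right 0 (fun e => f t <= f e)).
  { exists (mkposreal t ltac:(lra)). intros y Hy Hy0. apply Hmvt.
    change (Rabs (y - 0) < t) in Hy. apply Rabs_lt_between in Hy. lra. }
  exact (filterlim_le (fun _ => f t) f (f t) (f 0) Hev (filterlim_const _) Hright).
Qed.

Lemma linear_comparison (y dy : R -> R) (l G t : R) :
  0 < l -> 0 <= G -> 0 <= t -> cont_at_nonneg y 0 ->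
  (forall s, 0 < s -> is_derive y s (dy s)) ->
  (forall s, 0 < s <= t -> dy s <= - l * y s + G) ->
  y t <= y 0 * exp (- l * t) + G / l.
Proof.
  intros Hl HG Ht Hc Hd Hb.
  set (h := fun s => (y s + - (G / l)) * exp (l * s)).
  assert (Hh : h t <= h 0).
  { apply (nonincreasing_of_deriv_nonpos h
             (fun s => (dy s + 0) * exp (l * s) + (y s + - (G / l)) * (l * exp (l * s)))); auto.
    - apply cont_at_nonneg_mult.
      + exact (cont_at_nonneg_plus _ _ 0 Hc (cont_at_nonneg_const _ 0)).
      + apply cont_at_nonneg_of_continuous.
        apply (ex_derive_continuous (K := R_AbsRing) (V := R_NormedModule)).
        eexists. apply is_derive_exp_lin.
    - intros s Hs. apply (is_derive_Rmult (fun s => y s + - (G / l)) (fun s => exp (l * s)));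
        [| apply is_derive_exp_lin].
      apply is_derive_Rplus; [auto |].
      apply (is_derive_const (K := R_AbsRing) (V := R_NormedModule)).
    - intros s Hs. specialize (Hb s Hs). pose proof (exp_pos (l * s)).
      replace ((dy s + 0) * exp (l * s) + (y s + - (G / l)) * (l * exp (l * s)))
        with ((dy s + l * y s - G) * exp (l * s)) by (field; lra).
      apply Rmult_le_0_r; lra. }
  unfold h in Hh. rewrite Rmult_0_r, exp_0, Rmult_1_r in Hh.
  assert (Hinv : exp (- l * t) * exp (l * t) = 1).
  { rewrite <- exp_plus. replace (- l * t + l * t) with 0 by ring. apply exp_0. }
  pose proof (exp_pos (- l * t)). pose proof (exp_pos (l * t)).
  assert (y t + - (G / l) <= (y 0 + - (G / l)) * exp (- l * t)).
  { apply (Rmult_le_reg_r (exp (l * t))); [lra |].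
    rewrite Rmult_assoc, Hinv, Rmult_1_r. exact Hh. }
  assert (0 <= G / l) by (apply Rdiv_le_0_compat; lra). nra.
Qed.

Definition sqnorm4 (y1 y2 y3 y4 : R) : R := y1 ^ 2 + y2 ^ 2 + y3 ^ 2 + y4 ^ 2.

Lemma sq_sum2 (a b : R) : (a + b) ^ 2 <= 2 * (a ^ 2 + b ^ 2).
Proof. pose proof (pow2_ge_0 (a - b)). nra. Qed.

Lemma sq_sum4 (a b c d : R) : (a + b + c + d) ^ 2 <= 4 * (a ^ 2 + b ^ 2 + c ^ 2 + d ^ 2).
Proof.
  pose proof (pow2_ge_0 (a - b)). pose proof (pow2_ge_0 (a - c)). pose proof (pow2_ge_0 (a - d)).
  pose proof (pow2_ge_0 (b - c)). pose proof (pow2_ge_0 (b - d)). pose proof (pow2_ge_0 (c - d)).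
  nra.
Qed.

Lemma weighted_sqnorm_le (a1 a2 a3 a4 M y1 y2 y3 y4 : R) :
  a1 <= M -> a2 <= M -> a3 <= M -> a4 <= M ->
  a1 * y1 ^ 2 + a2 * y2 ^ 2 + a3 * y3 ^ 2 + a4 * y4 ^ 2 <= M * sqnorm4 y1 y2 y3 y4.
Proof.
  intros H1 H2 H3 H4. unfold sqnorm4.
  pose proof (Rmult_le_compat_r _ _ _ (pow2_ge_0 y1) H1).
  pose proof (Rmult_le_compat_r _ _ _ (pow2_ge_0 y2) H2).
  pose proof (Rmult_le_compat_r _ _ _ (pow2_ge_0 y3) H3).
  pose proof (Rmult_le_compat_r _ _ _ (pow2_ge_0 y4) H4).
  lra.
Qed.

Lemma sqrt_le_sum (X p q : R) : 0 <= p -> 0 <= q -> X <= p ^ 2 + q ^ 2 -> sqrt X <= p + q.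
Proof.
  intros Hp Hq HX. rewrite <- (sqrt_pow2 (p + q)) by lra.
  apply sqrt_le_1_alt. nra.
Qed.

Lemma young (p x y : R) : 0 < p -> 2 * x * y <= p * x ^ 2 + / p * y ^ 2.
Proof.
  intro Hp. pose proof (pow2_ge_0 (p * x - y)) as H.
  pose proof (Rmult_le_compat_l _ _ _ (Rlt_le _ _ (Rinv_0_lt_compat _ Hp)) H) as H'.
  replace (/ p * (p * x - y) ^ 2) with (p * x ^ 2 - 2 * x * y + / p * y ^ 2) in H' by (field; lra).
  lra.
Qed.

Section Vehicle.

Variables Kdp Kdv l1 l2 : R.
Hypotheses (hKdp : 0 < Kdp) (hKdv : 0 < Kdv) (hl1 : 0 < l1) (hl2 : 0 < l2).

(* Error coordinates: e = Delta p_i - Delta p^r_i and f = Delta v_i - Delta v^r_i. *)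
Definition err_e (x1 x3 : R) : R := x1 + x3.
Definition err_f (x1 x2 x3 x4 : R) : R := Kdp * x1 + x2 + (Kdp - l1) * x3 + x4.

Definition lyap_weight : R := 1 + 2 / (l1 * l2).
Definition decay_rate : R := Rmin (Rmin Kdp Kdv) (Rmin l1 (l2 / 2)).

Definition lyapV (x1 x2 x3 x4 : R) : R :=
  err_e x1 x3 ^ 2 + err_f x1 x2 x3 x4 ^ 2 + x3 ^ 2 + lyap_weight * x4 ^ 2.

Lemma lyap_weight_ge1 : 1 <= lyap_weight.
Proof.
  unfold lyap_weight. assert (0 < 2 / (l1 * l2)) by (apply Rdiv_lt_0_compat; nra). lra.
Qed.

Lemma decay_rate_spec :
  0 < decay_rate /\ decay_rate <= Kdp /\ decay_rate <= Kdv /\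
  decay_rate <= l1 /\ decay_rate <= l2 / 2.
Proof.
  unfold decay_rate.
  pose proof (Rmin_l (Rmin Kdp Kdv) (Rmin l1 (l2/2))).
  pose proof (Rmin_r (Rmin Kdp Kdv) (Rmin l1 (l2/2))).
  pose proof (Rmin_l Kdp Kdv). pose proof (Rmin_r Kdp Kdv).
  pose proof (Rmin_l l1 (l2/2)). pose proof (Rmin_r l1 (l2/2)).
  repeat split; try lra.
  apply Rmin_glb_lt; apply Rmin_glb_lt; lra.
Qed.

Lemma error_dynamics (x1 x2 x3 x4 g : R) :
  let dx1 := x2 in
  let dx2 := rhs2 Kdp Kdv l1 l2 x1 x2 x3 x4 g in
  let dx3 := - l1 * x3 + x4 in
  let dx4 := - l2 * x4 + g in
  err_e dx1 dx3 = - Kdp * err_e x1 x3 + err_f x1 x2 x3 x4 /\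
  err_f dx1 dx2 dx3 dx4 = - err_e x1 x3 - Kdv * err_f x1 x2 x3 x4.
Proof. unfold err_e, err_f, rhs2. split; ring. Qed.

Lemma lyap_decrease (e f x3 x4 g : R) :
  2 * e * (- Kdp * e + f) + 2 * f * (- e - Kdv * f)
  + 2 * x3 * (- l1 * x3 + x4) + lyap_weight * (2 * x4 * (- l2 * x4 + g))
  <= - decay_rate * (e ^ 2 + f ^ 2 + x3 ^ 2 + lyap_weight * x4 ^ 2)
     + lyap_weight / l2 * g ^ 2.
Proof.
  destruct decay_rate_spec as (Hmu & HmuKp & HmuKv & Hmul1 & Hmul2).
  pose proof lyap_weight_ge1 as Hw.
  set (mu := decay_rate) in *. set (w := lyap_weight) in *.
  pose proof (young l1 x3 x4 hl1) as Hx3x4.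
  pose proof (young l2 x4 g hl2) as Hx4g.
  assert (Hw4 : mu * w + / l1 <= w * l2).
  { unfold w, lyap_weight.
    replace ((1 + 2 / (l1 * l2)) * l2) with (l2 + 2 / l1) by (field; lra).
    assert (mu * (2 / (l1 * l2)) <= / l1).
    { replace (/ l1) with (l2 / 2 * (2 / (l1 * l2))) by (field; lra).
      apply Rmult_le_compat_r; [apply Rlt_le, Rdiv_lt_0_compat; nra | lra]. }
    replace (mu * (1 + 2 / (l1 * l2))) with (mu + mu * (2 / (l1 * l2))) by ring.
    lra. }
  pose proof (pow2_ge_0 e). pose proof (pow2_ge_0 f).
  pose proof (pow2_ge_0 x3). pose proof (pow2_ge_0 x4).
  replace (w / l2 * g ^ 2) with (w * (/ l2 * g ^ 2)) by (field; lra).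
  nra.
Qed.

Definition norm_const : R := 5 + 8 * Kdp ^ 2 + 8 * l1 ^ 2.

Lemma sqnorm_le_err (x1 x2 x3 x4 : R) :
  sqnorm4 x1 x2 x3 x4 <= norm_const * sqnorm4 (err_e x1 x3) (err_f x1 x2 x3 x4) x3 x4.
Proof.
  set (e := err_e x1 x3). set (f := err_f x1 x2 x3 x4).
  pose proof (sq_sum2 e (- x3)) as H1.
  pose proof (sq_sum4 f (- Kdp * e) (l1 * x3) (- x4)) as H2.
  replace (e + - x3) with x1 in H1 by (unfold e, err_e; ring).
  replace (f + - Kdp * e + l1 * x3 + - x4) with x2 in H2 by (unfold e, f, err_e, err_f; ring).
  assert (Hx : sqnorm4 x1 x2 x3 x4
               <= (2 + 4 * Kdp ^ 2) * e ^ 2 + 4 * f ^ 2 + (3 + 4 * l1 ^ 2) * x3 ^ 2 + 5 * x4 ^ 2).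
  { unfold sqnorm4. nra. }
  eapply Rle_trans; [exact Hx |].
  pose proof (pow2_ge_0 Kdp). pose proof (pow2_ge_0 l1).
  apply weighted_sqnorm_le; unfold norm_const; lra.
Qed.

Lemma err_le_sqnorm (x1 x2 x3 x4 : R) :
  sqnorm4 (err_e x1 x3) (err_f x1 x2 x3 x4) x3 x4 <= norm_const * sqnorm4 x1 x2 x3 x4.
Proof.
  pose proof (sq_sum2 x1 x3) as H1.
  pose proof (sq_sum4 (Kdp * x1) x2 ((Kdp - l1) * x3) x4) as H2.
  pose proof (sq_sum2 Kdp (- l1)) as H3.
  pose proof (Rmult_le_compat_r _ _ _ (pow2_ge_0 x3) H3) as H4.
  assert (He : sqnorm4 (err_e x1 x3) (err_f x1 x2 x3 x4) x3 x4
               <= (2 + 4 * Kdp ^ 2) * x1 ^ 2 + 4 * x2 ^ 2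
                  + (3 + 8 * Kdp ^ 2 + 8 * l1 ^ 2) * x3 ^ 2 + 5 * x4 ^ 2).
  { unfold sqnorm4, err_e, err_f. nra. }
  eapply Rle_trans; [exact He |].
  pose proof (pow2_ge_0 Kdp). pose proof (pow2_ge_0 l1).
  apply weighted_sqnorm_le; unfold norm_const; lra.
Qed.

(* Since w >= 1:  |x|^2 <= C V  and  V <= w C |x|^2. *)
Lemma lyap_sandwich (x1 x2 x3 x4 : R) :
  sqnorm4 x1 x2 x3 x4 <= norm_const * lyapV x1 x2 x3 x4 /\
  lyapV x1 x2 x3 x4 <= lyap_weight * norm_const * sqnorm4 x1 x2 x3 x4.
Proof.
  pose proof lyap_weight_ge1 as Hw.
  assert (Hc : 0 <= norm_const)
    by (unfold norm_const; pose proof (pow2_ge_0 Kdp); pose proof (pow2_ge_0 l1); lra).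
  pose proof (pow2_ge_0 x4) as H4.
  assert (HV : sqnorm4 (err_e x1 x3) (err_f x1 x2 x3 x4) x3 x4 <= lyapV x1 x2 x3 x4 /\
               lyapV x1 x2 x3 x4 <= lyap_weight * sqnorm4 (err_e x1 x3) (err_f x1 x2 x3 x4) x3 x4).
  { unfold lyapV, sqnorm4.
    pose proof (pow2_ge_0 (err_e x1 x3)). pose proof (pow2_ge_0 (err_f x1 x2 x3 x4)).
    pose proof (pow2_ge_0 x3). split; nra. }
  pose proof (sqnorm_le_err x1 x2 x3 x4). pose proof (err_le_sqnorm x1 x2 x3 x4).
  split; nra.
Qed.

Lemma err_e_derivative (z1 z3 : R -> R) (s d1 d3 : R) :
  is_derive z1 s d1 -> is_derive z3 s d3 ->
  is_derive (fun s => err_e (z1 s) (z3 s)) s (err_e d1 d3).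
Proof. intros H1 H3. exact (is_derive_Rplus z1 z3 s d1 d3 H1 H3). Qed.

Lemma err_f_derivative (z1 z2 z3 z4 : R -> R) (s d1 d2 d3 d4 : R) :
  is_derive z1 s d1 -> is_derive z2 s d2 -> is_derive z3 s d3 -> is_derive z4 s d4 ->
  is_derive (fun s => err_f (z1 s) (z2 s) (z3 s) (z4 s)) s (err_f d1 d2 d3 d4).
Proof.
  intros H1 H2 H3 H4. unfold err_f.
  apply (is_derive_Rplus (fun s => Kdp * z1 s + z2 s + (Kdp - l1) * z3 s)); [| exact H4].
  apply (is_derive_Rplus (fun s => Kdp * z1 s + z2 s)); [| exact (is_derive_scal _ _ _ _ H3)].
  exact (is_derive_Rplus _ _ _ _ _ (is_derive_scal _ _ _ _ H1) H2).
Qed.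

Lemma lyap_derivative (z1 z2 z3 z4 : R -> R) (s d1 d2 d3 d4 : R) :
  is_derive z1 s d1 -> is_derive z2 s d2 -> is_derive z3 s d3 -> is_derive z4 s d4 ->
  is_derive (fun s => lyapV (z1 s) (z2 s) (z3 s) (z4 s)) s
    (2 * err_e (z1 s) (z3 s) * err_e d1 d3
     + 2 * err_f (z1 s) (z2 s) (z3 s) (z4 s) * err_f d1 d2 d3 d4
     + 2 * z3 s * d3 + lyap_weight * (2 * z4 s * d4)).
Proof.
  intros H1 H2 H3 H4. unfold lyapV.
  set (E := fun s => err_e (z1 s) (z3 s)).
  set (F := fun s => err_f (z1 s) (z2 s) (z3 s) (z4 s)).
  pose proof (is_derive_sq E s _ (err_e_derivative _ _ _ _ _ H1 H3)) as HE.
  pose proof (is_derive_sq F s _ (err_f_derivative _ _ _ _ _ _ _ _ _ H1 H2 H3 H4)) as HF.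
  apply (is_derive_Rplus (fun s => E s ^ 2 + F s ^ 2 + z3 s ^ 2));
    [| exact (is_derive_scal _ _ _ _ (is_derive_sq _ _ _ H4))].
  apply (is_derive_Rplus (fun s => E s ^ 2 + F s ^ 2)); [| exact (is_derive_sq _ _ _ H3)].
  exact (is_derive_Rplus _ _ _ _ _ HE HF).
Qed.

Lemma lyap_continuous (z1 z2 z3 z4 : R -> R) :
  cont_at_nonneg z1 0 -> cont_at_nonneg z2 0 -> cont_at_nonneg z3 0 -> cont_at_nonneg z4 0 ->
  cont_at_nonneg (fun s => lyapV (z1 s) (z2 s) (z3 s) (z4 s)) 0.
Proof.
  intros H1 H2 H3 H4.
  pose proof (fun c z Hz => cont_at_nonneg_mult (fun _ => c) z 0 (cont_at_nonneg_const c 0) Hz)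
    as Hscal.
  set (E := fun s => err_e (z1 s) (z3 s)).
  set (F := fun s => err_f (z1 s) (z2 s) (z3 s) (z4 s)).
  assert (HE : cont_at_nonneg E 0) by exact (cont_at_nonneg_plus _ _ _ H1 H3).
  assert (HF : cont_at_nonneg F 0).
  { unfold F, err_f.
    apply (cont_at_nonneg_plus (fun s => Kdp * z1 s + z2 s + (Kdp - l1) * z3 s)); [| exact H4].
    apply (cont_at_nonneg_plus (fun s => Kdp * z1 s + z2 s)); [| exact (Hscal _ _ H3)].
    exact (cont_at_nonneg_plus _ _ _ (Hscal _ _ H1) H2). }
  unfold lyapV.
  apply (cont_at_nonneg_plus (fun s => E s ^ 2 + F s ^ 2 + z3 s ^ 2));
    [| exact (Hscal _ _ (cont_at_nonneg_sq _ _ H4))].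
  apply (cont_at_nonneg_plus (fun s => E s ^ 2 + F s ^ 2)); [| exact (cont_at_nonneg_sq _ _ H3)].
  exact (cont_at_nonneg_plus _ _ _ (cont_at_nonneg_sq _ _ HE) (cont_at_nonneg_sq _ _ HF)).
Qed.

Lemma lyap_along_solution (z1 z2 z3 z4 g : R -> R) (G t : R) :
  sol_on z1 z2 ->
  sol_on z2 (fun t => rhs2 Kdp Kdv l1 l2 (z1 t) (z2 t) (z3 t) (z4 t) (g t)) ->
  sol_on z3 (fun t => - l1 * z3 t + z4 t) ->
  sol_on z4 (fun t => - l2 * z4 t + g t) ->
  0 <= G -> 0 <= t -> (forall s, 0 < s <= t -> Rabs (g s) <= G) ->
  lyapV (z1 t) (z2 t) (z3 t) (z4 t)
  <= lyapV (z1 0) (z2 0) (z3 0) (z4 0) * exp (- decay_rate * t)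
     + lyap_weight / (l2 * decay_rate) * G ^ 2.
Proof.
  intros [C1 D1] [C2 D2] [C3 D3] [C4 D4] HG Ht Hg.
  destruct decay_rate_spec as [Hmu _].
  pose proof lyap_weight_ge1 as Hw.
  assert (Hk : 0 <= lyap_weight / l2 * G ^ 2)
    by (apply Rmult_le_pos; [apply Rdiv_le_0_compat | apply pow2_ge_0]; lra).
  replace (lyap_weight / (l2 * decay_rate) * G ^ 2)
    with (lyap_weight / l2 * G ^ 2 / decay_rate) by (field; lra).
  eapply (linear_comparison (fun s => lyapV (z1 s) (z2 s) (z3 s) (z4 s)));
    [exact Hmu | exact Hk | exact Ht | | |].
  - apply lyap_continuous; [apply C1 | apply C2 | apply C3 | apply C4]; lra.
  - intros s Hs. apply lyap_derivative; [apply D1 | apply D2 | apply D3 | apply D4]; exact Hs.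
  - intros s Hs. simpl.
    destruct (error_dynamics (z1 s) (z2 s) (z3 s) (z4 s) (g s)) as [He Hf].
    rewrite He, Hf.
    assert (Hgs : g s ^ 2 <= G ^ 2).
    { specialize (Hg s Hs). apply Rabs_le_between in Hg. nra. }
    assert (0 <= lyap_weight / l2) by (apply Rdiv_le_0_compat; lra).
    eapply Rle_trans; [apply lyap_decrease |].
    unfold lyapV. pose proof (Rmult_le_compat_l _ _ _ H Hgs). lra.
Qed.

Definition gain_init : R := sqrt (norm_const * (lyap_weight * norm_const)).
Definition gain_input : R := sqrt (norm_const * (lyap_weight / (l2 * decay_rate))).

Lemma gains_pos : 0 < gain_init /\ 0 < gain_input.
Proof.
  destruct decay_rate_spec as [Hmu _]. pose proof lyap_weight_ge1.
  assert (0 < norm_const)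
    by (unfold norm_const; pose proof (pow2_ge_0 Kdp); pose proof (pow2_ge_0 l1); lra).
  assert (0 < lyap_weight / (l2 * decay_rate)) by (apply Rdiv_lt_0_compat; nra).
  split; apply sqrt_lt_R0; nra.
Qed.

Lemma vehicle_estimate (z1 z2 z3 z4 g : R -> R) (G t : R) :
  sol_on z1 z2 ->
  sol_on z2 (fun t => rhs2 Kdp Kdv l1 l2 (z1 t) (z2 t) (z3 t) (z4 t) (g t)) ->
  sol_on z3 (fun t => - l1 * z3 t + z4 t) ->
  sol_on z4 (fun t => - l2 * z4 t + g t) ->
  0 <= G -> 0 <= t -> (forall s, 0 < s <= t -> Rabs (g s) <= G) ->
  norm4 (z1 t) (z2 t) (z3 t) (z4 t)
  <= gain_init * norm4 (z1 0) (z2 0) (z3 0) (z4 0) * exp (- (decay_rate / 2) * t)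
     + gain_input * G.
Proof.
  intros H1 H2 H3 H4 HG Ht Hg.
  pose proof (lyap_along_solution z1 z2 z3 z4 g G t H1 H2 H3 H4 HG Ht Hg) as HV.
  destruct (lyap_sandwich (z1 t) (z2 t) (z3 t) (z4 t)) as [Ht_low _].
  destruct (lyap_sandwich (z1 0) (z2 0) (z3 0) (z4 0)) as [_ H0_up].
  destruct decay_rate_spec as [Hmu _]. pose proof lyap_weight_ge1.
  destruct gains_pos as [HA HB].
  assert (Hc : 0 <= norm_const)
    by (unfold norm_const; pose proof (pow2_ge_0 Kdp); pose proof (pow2_ge_0 l1); lra).
  assert (Hk : 0 <= lyap_weight / (l2 * decay_rate)) by (apply Rdiv_le_0_compat; nra).
  set (S0 := sqnorm4 (z1 0) (z2 0) (z3 0) (z4 0)) in *.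
  assert (HS0 : 0 <= S0)
    by (unfold S0, sqnorm4; pose proof (pow2_ge_0 (z1 0)); pose proof (pow2_ge_0 (z2 0));
        pose proof (pow2_ge_0 (z3 0)); pose proof (pow2_ge_0 (z4 0)); lra).
  assert (Hexp : exp (- (decay_rate / 2) * t) ^ 2 = exp (- decay_rate * t)).
  { simpl. rewrite Rmult_1_r, <- exp_plus. f_equal. field. }
  change (sqrt (sqnorm4 (z1 t) (z2 t) (z3 t) (z4 t))
          <= gain_init * sqrt S0 * exp (- (decay_rate / 2) * t) + gain_input * G).
  apply sqrt_le_sum.
  - apply Rmult_le_pos; [apply Rmult_le_pos; [lra | apply sqrt_pos] | apply Rlt_le, exp_pos].
  - apply Rmult_le_pos; lra.
  - replace ((gain_init * sqrt S0 * exp (- (decay_rate / 2) * t)) ^ 2)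
      with (gain_init ^ 2 * sqrt S0 ^ 2 * exp (- (decay_rate / 2) * t) ^ 2) by ring.
    replace ((gain_input * G) ^ 2) with (gain_input ^ 2 * G ^ 2) by ring.
    unfold gain_init, gain_input. rewrite !pow2_sqrt by nra. rewrite Hexp.
    pose proof (exp_pos (- decay_rate * t)).
    pose proof (Rmult_le_compat_r _ _ _ (Rlt_le _ _ H0) H0_up).
    nra.
Qed.

End Vehicle.

Lemma count_pos (m : nat) : 0 < INR (m + 1).
Proof. apply lt_0_INR. lia. Qed.

Lemma average_le (h : nat -> R) (m : nat) (B : R) :
  (forall j, (j <= m)%nat -> h j <= B) -> sum_f_R0 h m / INR (m + 1) <= B.
Proof.
  intro Hh. pose proof (count_pos m) as Hm.
  apply (Rmult_le_reg_r (INR (m + 1))); [exact Hm |].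
  unfold Rdiv. rewrite Rmult_assoc, Rinv_l, Rmult_1_r by lra.
  replace (INR (m + 1)) with (INR (S m)) by (f_equal; lia).
  rewrite <- sum_cte. exact (sum_Rle h (fun _ => B) m Hh).
Qed.

Lemma mean_abs_le (f : nat -> R) (m : nat) (M : R) :
  (forall j, (j <= m)%nat -> Rabs (f j) <= M) -> Rabs (mean f m) <= M.
Proof.
  intro Hf. pose proof (count_pos m) as Hm. unfold mean, Rdiv.
  rewrite Rabs_mult, Rabs_inv, (Rabs_pos_eq (INR (m + 1))) by lra.
  eapply Rle_trans.
  - apply Rmult_le_compat_r; [left; apply Rinv_0_lt_compat, Hm | apply sum_f_R0_triangle].
  - exact (average_le (fun j => Rabs (f j)) m M Hf).
Qed.

Lemma pvar_le (f : nat -> R) (m : nat) (M : R) :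
  (forall j, (j <= m)%nat -> Rabs (f j) <= M) -> pvar f m <= (2 * M) ^ 2.
Proof.
  intro Hf. pose proof (mean_abs_le f m M Hf) as Hmean. apply Rabs_le_between in Hmean.
  apply average_le. intros j Hj. specialize (Hf j Hj). apply Rabs_le_between in Hf. nra.
Qed.

Lemma sgn_abs_le (x : R) : Rabs (sgn x) <= 1.
Proof.
  unfold sgn. destruct (Rlt_dec 0 x); [rewrite Rabs_R1; lra |].
  destruct (Rlt_dec x 0); [rewrite Rabs_left | rewrite Rabs_R0]; lra.
Qed.

Lemma psi_abs_le (gam : R) (f : nat -> R) (m : nat) (M : R) :
  0 <= gam -> 0 <= M -> (forall j, (j <= m)%nat -> Rabs (f j) <= M) ->
  Rabs (psi gam f m) <= gam * (2 * M).
Proof.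
  intros Hgam HM Hf. unfold psi.
  rewrite !Rabs_mult, (Rabs_pos_eq gam Hgam), (Rabs_pos_eq (sqrt _)) by apply sqrt_pos.
  assert (Hsq : sqrt (pvar f m) <= 2 * M).
  { rewrite <- (sqrt_pow2 (2 * M)) by lra. apply sqrt_le_1_alt, pvar_le, Hf. }
  pose proof (sgn_abs_le (mean f m)). pose proof (Rabs_pos (sgn (mean f m))).
  pose proof (sqrt_pos (pvar f m)).
  rewrite Rmult_assoc. apply Rmult_le_compat_l; [exact Hgam |]. nra.
Qed.

Lemma abs_le_norm4 (y1 y2 y3 y4 : R) : Rabs y1 <= norm4 y1 y2 y3 y4 /\ Rabs y2 <= norm4 y1 y2 y3 y4.
Proof.
  unfold norm4. pose proof (pow2_ge_0 y1). pose proof (pow2_ge_0 y2).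
  pose proof (pow2_ge_0 y3). pose proof (pow2_ge_0 y4).
  split; rewrite <- sqrt_Rsqr_abs; apply sqrt_le_1_alt; unfold Rsqr; simpl in *; nra.
Qed.

Lemma gterm_abs_le (a b gdp gdv : R) (x1 x2 x3 x4 : nat -> R -> R) (i : nat) (s M : R) :
  0 <= a -> 0 <= b -> 0 <= gdp -> 0 <= gdv -> 0 <= M ->
  (forall j, (j < i)%nat -> norm4 (x1 j s) (x2 j s) (x3 j s) (x4 j s) <= M) ->
  Rabs (gterm a b gdp gdv x1 x2 i s) <= 2 * (a * gdp + b * gdv) * M.
Proof.
  intros Ha Hb Hgp Hgv HM Hpred. destruct i as [| m]; simpl.
  - rewrite Rabs_R0. apply Rmult_le_pos; [| exact HM]. nra.
  - assert (P1 : Rabs (psi gdp (fun j => x1 j s) m) <= gdp * (2 * M)).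
    { apply psi_abs_le; [exact Hgp | exact HM |]. intros j Hj.
      eapply Rle_trans; [apply (proj1 (abs_le_norm4 _ (x2 j s) (x3 j s) (x4 j s))) |].
      apply Hpred; lia. }
    assert (P2 : Rabs (psi gdv (fun j => x2 j s) m) <= gdv * (2 * M)).
    { apply psi_abs_le; [exact Hgv | exact HM |]. intros j Hj.
      eapply Rle_trans; [apply (proj2 (abs_le_norm4 (x1 j s) _ (x3 j s) (x4 j s))) |].
      apply Hpred; lia. }
    eapply Rle_trans; [apply Rabs_triang |].
    rewrite !Rabs_mult, (Rabs_pos_eq a Ha), (Rabs_pos_eq b Hb).
    nra.
Qed.

Lemma classKL_mono (be : R -> R -> R) (r r' t : R) :
  classKL be -> 0 <= t -> 0 <= r -> r <= r' -> be r t <= be r' t.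
Proof.
  intros [HK _] Ht Hr Hrr. destruct (HK t Ht) as (_ & _ & Hinc).
  destruct (Req_dec r r') as [-> | Hne]; [lra |]. left. apply Hinc; lra.
Qed.

Lemma classKL_nonneg (be : R -> R -> R) (r t : R) :
  classKL be -> 0 <= t -> 0 <= r -> 0 <= be r t.
Proof.
  intros Hbe Ht Hr. destruct (proj1 Hbe t Ht) as [Hz _].
  apply Rle_trans with (be 0 t); [rewrite Hz; lra | apply classKL_mono; [exact Hbe | lra ..]].
Qed.

Lemma classKL_small_at0 (be : R -> R -> R) (eps : R) :
  classKL be -> 0 < eps -> exists delta, 0 < delta /\ be delta 0 < eps.
Proof.
  intros [HK _] Heps. destruct (HK 0 (Rle_refl 0)) as (H0 & Hc & _).
  pose proof (proj1 (filterlim_locally _ _) (Hc 0 (Rle_refl 0)) (mkposreal eps Heps)) as [d Hd].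
  exists (d / 2). split; [destruct d; simpl; lra |].
  assert (Hball : ball 0 d (d / 2)).
  { change (Rabs (d / 2 - 0) < d). rewrite Rabs_pos_eq; destruct d; simpl; lra. }
  specialize (Hd (d / 2) Hball ltac:(destruct d; simpl; lra)).
  change (Rabs (be (d / 2) 0 - be 0 0) < eps) in Hd. rewrite H0 in Hd.
  apply Rabs_lt_between in Hd. lra.
Qed.

Lemma finite_upper_bound (h : nat -> R) (N : nat) :
  exists r, 0 <= r /\ forall i, (i <= N)%nat -> h i <= r.
Proof.
  induction N as [| N [r [Hr Hb]]].
  - exists (Rmax 0 (h 0%nat)). split; [apply Rmax_l |].
    intros i Hi. replace i with 0%nat by lia. apply Rmax_r.
  - exists (Rmax r (h (S N))). split; [eapply Rle_trans; [exact Hr | apply Rmax_l] |].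
    intros i Hi. destruct (Nat.eq_dec i (S N)) as [-> | Hne]; [apply Rmax_r |].
    eapply Rle_trans; [apply Hb; lia | apply Rmax_l].
Qed.

(* Small-gain argument for a finite cascade: nrm i is the size of the state of
   subsystem i, which satisfies an ISS estimate with KL-function be and gain
   gam < 1 with respect to the earlier subsystems j < i, from every initial
   time T (time invariance). *)
Section SmallGainCascade.

Variables (be : R -> R -> R) (gam : R) (N : nat) (nrm : nat -> R -> R).
Hypotheses (Hbe : classKL be) (Hgam : 0 <= gam < 1) (Hnrm : forall j t, 0 <= nrm j t).
Hypothesis Hiss : forall T t i M, 0 <= T -> 0 <= t -> (i <= N)%nat -> 0 <= M ->
  (forall j tau, (j < i)%nat -> 0 <= tau <= t -> nrm j (T + tau) <= M) ->
  nrm i (T + t) <= be (nrm i T) t + gam * M.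

(* Stability: if all initial sizes are <= r, then every nrm i stays below
   be r 0 / (1 - gam), the fixed point of Q = be r 0 + gam Q. *)
Lemma cascade_uniform_bound (r : R) :
  0 <= r -> (forall i, (i <= N)%nat -> nrm i 0 <= r) ->
  forall i t, (i <= N)%nat -> 0 <= t -> nrm i t <= be r 0 / (1 - gam).
Proof.
  intros Hr H0.
  set (Q := be r 0 / (1 - gam)).
  assert (HQ : be r 0 + gam * Q = Q) by (unfold Q; field; lra).
  assert (HQ0 : 0 <= Q).
  { unfold Q. apply Rdiv_le_0_compat; [apply classKL_nonneg; [exact Hbe | lra ..] | lra]. }
  assert (Hind : forall k i, (i < k)%nat -> (i <= N)%nat -> forall t, 0 <= t -> nrm i t <= Q).
  { induction k as [| k IH]; intros i Hik HiN t Ht; [lia |].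
    replace t with (0 + t) by ring.
    eapply Rle_trans; [apply Hiss; [lra | exact Ht | exact HiN | exact HQ0 |] |].
    - intros j tau Hj Htau. rewrite Rplus_0_l. apply (IH j); lia || lra.
    - assert (be (nrm i 0) t <= be r 0).
      { eapply Rle_trans;
          [apply classKL_mono; [exact Hbe | exact Ht | apply Hnrm | apply H0, HiN] |].
        apply (proj1 (proj2 Hbe r Hr)); lra. }
      nra. }
  intros i t Hi Ht. exact (Hind (S i) i (Nat.lt_succ_diag_r i) Hi t Ht).
Qed.

Lemma cascade_bounded :
  exists Q, 0 <= Q /\ forall i t, (i <= N)%nat -> 0 <= t -> nrm i t <= Q.
Proof.
  destruct (finite_upper_bound (fun i => nrm i 0) N) as [r [Hr Hb]].
  exists (be r 0 / (1 - gam)). split.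
  - apply Rdiv_le_0_compat; [apply classKL_nonneg; [exact Hbe | lra ..] | lra].
  - exact (cascade_uniform_bound r Hr Hb).
Qed.

(* Attractivity, by induction along the cascade: once the first k subsystems
   are below eta/2 after time T1, the KL term of subsystem k decays, so it is
   below eta from some later time on. *)
Lemma cascade_converges (k : nat) :
  (k <= S N)%nat -> forall eta, 0 < eta -> exists T, 0 <= T /\
    forall j tau, (j < k)%nat -> T <= tau -> nrm j tau <= eta.
Proof.
  induction k as [| k IH]; intros Hk eta Heta.
  - exists 0. split; [lra | intros; lia].
  - destruct (IH ltac:(lia) (eta / 2) ltac:(lra)) as [T1 [HT1 Hconv]].
    destruct cascade_bounded as [Q [HQ HQb]].
    pose proof (proj2 (proj2 Hbe Q HQ)) as Hlim.
    apply is_lim_spec in Hlim.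
    destruct (Hlim (mkposreal (eta / 2) ltac:(lra))) as [S0 HS0]. simpl in HS0.
    exists (T1 + Rmax S0 0 + 1).
    pose proof (Rmax_l S0 0). pose proof (Rmax_r S0 0).
    split; [lra |]. intros j tau Hj Htau.
    destruct (Nat.eq_dec j k) as [-> | Hne].
    + replace tau with (T1 + (tau - T1)) by ring.
      eapply Rle_trans; [apply (Hiss T1 (tau - T1) k (eta / 2)); [lra | lra | lia | lra |] |].
      * intros j' tau' Hj' Htau'. apply Hconv; [exact Hj' | lra].
      * assert (be (nrm k T1) (tau - T1) <= be Q (tau - T1))
          by (apply classKL_mono; [exact Hbe | lra | apply Hnrm | apply HQb; lia || lra]).
        assert (Hsmall : Rabs (be Q (tau - T1) - 0) < eta / 2) by (apply HS0; lra).
        rewrite Rminus_0_r in Hsmall. apply Rabs_lt_between in Hsmall.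
        assert (gam * (eta / 2) <= eta / 2) by nra. lra.
    + apply Rle_trans with (eta / 2); [apply Hconv; [lia | lra] | lra].
Qed.

Lemma cascade_limit (i : nat) : (i <= N)%nat -> is_lim (nrm i) p_infty 0.
Proof.
  intro Hi. apply is_lim_spec. intros [eps Heps]. simpl.
  destruct (cascade_converges (S N) (le_n _) (eps / 2) ltac:(lra)) as [T [_ HT]].
  exists T. intros x Hx. rewrite Rminus_0_r, Rabs_pos_eq by apply Hnrm.
  apply Rle_lt_trans with (eps / 2); [apply HT; [lia | lra] | lra].
Qed.

End SmallGainCascade.

Definition exp_KL (A c : R) : R -> R -> R := fun r t => A * r * exp (- c * t).

Lemma exp_decay (c : R) : 0 < c -> is_lim (fun t => exp (- c * t)) p_infty 0.
Proof.
  intro Hc.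
  apply (is_lim_comp exp (fun t => - c * t) p_infty 0 m_infty).
  - apply is_lim_exp_m.
  - apply is_lim_spec. intro M. exists (- M / c). intros x Hx.
    apply (Rmult_lt_compat_l c) in Hx; [| exact Hc].
    replace (c * (- M / c)) with (- M) in Hx by (field; lra). lra.
  - exists 0. intros; discriminate.
Qed.

Lemma exp_KL_classKL (A c : R) : 0 < A -> 0 < c -> classKL (exp_KL A c).
Proof.
  intros HA Hc. unfold exp_KL. split.
  - intros t Ht. pose proof (exp_pos (- c * t)). split; [ring | split].
    + intros r Hr. apply (cont_at_nonneg_of_continuous (fun r => A * r * exp (- c * t))).
      apply (continuous_mult (fun r => A * r) (fun _ => exp (- c * t))); [| apply continuous_const].
      apply (continuous_mult (fun _ => A) (fun r => r));
        [apply continuous_const | apply continuous_id].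
    + intros r s Hr Hrs. apply Rmult_lt_compat_r; [exact H | apply Rmult_lt_compat_l; lra].
  - intros r Hr. split.
    + intros s t Hs Hst. apply Rmult_le_compat_l; [nra |].
      destruct (Req_dec s t) as [-> | Hne]; [lra |].
      left. apply exp_increasing. nra.
    + replace (Finite 0) with (Rbar_mult (A * r) 0) by (simpl; f_equal; ring).
      apply is_lim_scal_l, exp_decay, Hc.
Qed.

Section Platoon.

Variables Kdp Kdv l1 l2 gdp gdv : R.
Hypotheses (hKdp : 0 < Kdp) (hKdv : 0 < Kdv) (hl1 : 0 < l1) (hl2 : 0 < l2)
  (hgdp : 0 < gdp) (hgdv : 0 < gdv).

Definition platoon_KL : R -> R -> R :=
  exp_KL (gain_init Kdp l1 l2) (decay_rate Kdp Kdv l1 l2 / 2).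

Lemma platoon_KL_classKL : classKL platoon_KL.
Proof.
  destruct (gains_pos Kdp Kdv l1 l2 hKdp hKdv hl1 hl2) as [HA _].
  destruct (decay_rate_spec Kdp Kdv l1 l2 hKdp hKdv hl1 hl2) as [Hmu _].
  apply exp_KL_classKL; lra.
Qed.

Lemma isolated_exp_stable : isolated_GES Kdp Kdv l1 l2.
Proof.
  destruct (gains_pos Kdp Kdv l1 l2 hKdp hKdv hl1 hl2) as [HA _].
  destruct (decay_rate_spec Kdp Kdv l1 l2 hKdp hKdv hl1 hl2) as [Hmu _].
  exists (gain_init Kdp l1 l2), (decay_rate Kdp Kdv l1 l2 / 2).
  split; [exact HA | split; [lra |]].
  intros z1 z2 z3 z4 (H1 & H2 & H3 & H4) t Ht.
  assert (H4' : sol_on z4 (fun t => - l2 * z4 t + 0)).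
  { destruct H4 as [C4 D4]. split; [exact C4 |].
    intros s Hs. rewrite Rplus_0_r. exact (D4 s Hs). }
  pose proof (vehicle_estimate Kdp Kdv l1 l2 hKdp hKdv hl1 hl2 z1 z2 z3 z4 (fun _ => 0) 0 t
                H1 H2 H3 H4' (Rle_refl 0) Ht) as H.
  rewrite Rmult_0_r, Rplus_0_r in H. apply H.
  intros. rewrite Rabs_R0. lra.
Qed.

Definition platoon_iss_bound (a b : R) (be : R -> R -> R) (gam : R) : Prop :=
  forall (N : nat) (x1 x2 x3 x4 : nat -> R -> R),
    platoon_sol Kdp Kdv l1 l2 gdp gdv a b N x1 x2 x3 x4 ->
    forall i, (i <= N)%nat -> forall t, 0 <= t ->
    forall M, 0 <= M ->
      (forall j tau, (j < i)%nat -> 0 <= tau -> tau <= t ->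
         norm4 (x1 j tau) (x2 j tau) (x3 j tau) (x4 j tau) <= M) ->
      norm4 (x1 i t) (x2 i t) (x3 i t) (x4 i t)
      <= be (norm4 (x1 i 0) (x2 i 0) (x3 i 0) (x4 i 0)) t + gam * M.

Lemma platoon_iss (a b gam : R) :
  0 <= a -> 0 <= b -> 2 * gain_input Kdp Kdv l1 l2 * (a * gdp + b * gdv) <= gam ->
  platoon_iss_bound a b platoon_KL gam.
Proof.
  intros Ha Hb Hgain N x1 x2 x3 x4 Hsol i Hi t Ht M HM Hpred.
  destruct (Hsol i Hi) as (H1 & H2 & H3 & H4).
  destruct (gains_pos Kdp Kdv l1 l2 hKdp hKdv hl1 hl2) as [_ HB].
  assert (Hab : 0 <= a * gdp + b * gdv) by nra.
  set (G := 2 * (a * gdp + b * gdv) * M).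
  assert (HG : 0 <= G) by (unfold G; apply Rmult_le_pos; lra).
  eapply Rle_trans.
  - apply (vehicle_estimate Kdp Kdv l1 l2 hKdp hKdv hl1 hl2 _ _ _ _ _ G t H1 H2 H3 H4 HG Ht).
    intros s Hs. apply (gterm_abs_le a b gdp gdv x1 x2 x3 x4); [lra .. |].
    intros j Hj. apply Hpred; [exact Hj | lra | lra].
  - unfold platoon_KL, exp_KL, G.
    replace (gain_input Kdp Kdv l1 l2 * (2 * (a * gdp + b * gdv) * M))
      with (2 * gain_input Kdp Kdv l1 l2 * (a * gdp + b * gdv) * M) by ring.
    apply Rplus_le_compat_l, Rmult_le_compat_r; lra.
Qed.

Lemma iss_estimate_of_gain (a b gam : R) (Ggam : R -> Prop) :
  0 <= a -> 0 <= b -> 2 * gain_input Kdp Kdv l1 l2 * (a * gdp + b * gdv) <= gam -> Ggam gam ->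
  iss_estimate Kdp Kdv l1 l2 gdp gdv a b Ggam.
Proof.
  intros Ha Hb Hgain Hgam. exists platoon_KL, gam.
  split; [exact platoon_KL_classKL | split; [exact Hgam |]].
  exact (platoon_iss a b gam Ha Hb Hgain).
Qed.

End Platoon.

Lemma shift_sol (f df : R -> R) (T : R) :
  0 < T -> sol_on f df -> sol_on (fun s => f (T + s)) (fun s => df (T + s)).
Proof.
  intros HT [Hc Hd]. split.
  - intros s Hs. apply (cont_at_nonneg_of_continuous (fun s => f (T + s)) s).
    apply (continuous_comp (fun s => T + s) f s).
    + apply (continuous_plus (fun _ => T) (fun s => s));
        [apply continuous_const | apply continuous_id].
    + apply (ex_derive_continuous (K := R_AbsRing) (V := R_NormedModule)).
      eexists. apply Hd. lra.
  - intros s Hs.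
    assert (Hlin : is_derive (fun s => T + s) s 1) by (auto_derive; [exact I | ring]).
    pose proof (is_derive_comp f (fun s => T + s) s (df (T + s)) 1
                  (Hd (T + s) ltac:(lra)) Hlin) as H.
    replace (df (T + s)) with (scal 1 (df (T + s))) by (apply (scal_one (K := R_Ring))).
    exact H.
Qed.

Section StringStability.

Variables Kdp Kdv l1 l2 gdp gdv a b : R.

Lemma shift_platoon (N : nat) (x1 x2 x3 x4 : nat -> R -> R) (T : R) :
  0 < T -> platoon_sol Kdp Kdv l1 l2 gdp gdv a b N x1 x2 x3 x4 ->
  platoon_sol Kdp Kdv l1 l2 gdp gdv a b N
    (fun j s => x1 j (T + s)) (fun j s => x2 j (T + s))
    (fun j s => x3 j (T + s)) (fun j s => x4 j (T + s)).
Proof.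
  intros HT Hsol i Hi. destruct (Hsol i Hi) as (H1 & H2 & H3 & H4).
  split; [| split; [| split]].
  - exact (shift_sol _ _ T HT H1).
  - pose proof (shift_sol _ _ T HT H2) as H. destruct i; exact H.
  - exact (shift_sol _ _ T HT H3).
  - pose proof (shift_sol _ _ T HT H4) as H. destruct i; exact H.
Qed.

Lemma platoon_iss_shifted (be : R -> R -> R) (gam : R) (N : nat)
    (x1 x2 x3 x4 : nat -> R -> R) :
  platoon_iss_bound Kdp Kdv l1 l2 gdp gdv a b be gam ->
  platoon_sol Kdp Kdv l1 l2 gdp gdv a b N x1 x2 x3 x4 ->
  let nrm := fun j t => norm4 (x1 j t) (x2 j t) (x3 j t) (x4 j t) in
  forall T t i M, 0 <= T -> 0 <= t -> (i <= N)%nat -> 0 <= M ->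
    (forall j tau, (j < i)%nat -> 0 <= tau <= t -> nrm j (T + tau) <= M) ->
    nrm i (T + t) <= be (nrm i T) t + gam * M.
Proof.
  intros HE Hsol nrm T t i M HT Ht Hi HM Hpred. unfold nrm in *.
  destruct (Req_dec T 0) as [-> | HT0].
  - rewrite Rplus_0_l. apply (HE N x1 x2 x3 x4 Hsol i Hi t Ht M HM).
    intros j tau Hj Htau Htaut. rewrite <- (Rplus_0_l tau). apply Hpred; [exact Hj | lra].
  - pose proof (HE N _ _ _ _ (shift_platoon N x1 x2 x3 x4 T ltac:(lra) Hsol) i Hi t Ht M HM
                  (fun j tau Hj Htau Htaut => Hpred j tau Hj (conj Htau Htaut))) as H.
    cbv beta in H. rewrite Rplus_0_r in H. exact H.
Qed.

Lemma asympt_string_stable_of_iss :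
  iss_estimate Kdp Kdv l1 l2 gdp gdv a b (fun gam => 0 < gam < 1) ->
  asympt_string_stable Kdp Kdv l1 l2 gdp gdv a b.
Proof.
  intros (be & gam & Hbe & Hgam & HE).
  change (platoon_iss_bound Kdp Kdv l1 l2 gdp gdv a b be gam) in HE.
  assert (Hgam' : 0 <= gam < 1) by lra.
  pose proof (fun N x1 x2 x3 x4 Hsol =>
    platoon_iss_shifted be gam N x1 x2 x3 x4 HE Hsol) as Hiss.
  split.
  - intros eps Heps.
    destruct (classKL_small_at0 be (eps * (1 - gam)) Hbe ltac:(nra)) as [delta [Hdelta Hsmall]].
    exists delta. split; [exact Hdelta |].
    intros N x1 x2 x3 x4 Hsol H0 i Hi t Ht.
    eapply Rle_lt_trans.
    + apply (cascade_uniform_bound be gam N _ Hbe Hgam' (fun j t => sqrt_pos _)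
               (Hiss N x1 x2 x3 x4 Hsol) delta ltac:(lra)); [| exact Hi | exact Ht].
      intros j Hj. left. exact (H0 j Hj).
    + apply (Rmult_lt_reg_r (1 - gam)); [lra |].
      unfold Rdiv. rewrite Rmult_assoc, Rinv_l, Rmult_1_r by lra. exact Hsmall.
  - intros N x1 x2 x3 x4 Hsol i Hi.
    exact (cascade_limit be gam N _ Hbe Hgam' (fun j t => sqrt_pos _)
             (Hiss N x1 x2 x3 x4 Hsol) i Hi).
Qed.

End StringStability.

Theorem theorem3 (Kdp Kdv l1 l2 gdp gdv : R)
  (hKdp : 0 < Kdp) (hKdv : 0 < Kdv) (hl1 : 0 < l1) (hl2 : 0 < l2)
  (hgdp : 0 < gdp) (hgdv : 0 < gdv) :
  (* (1) *)
  isolated_GES Kdp Kdv l1 l2 /\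
  (* (2) *)
  (forall a b, 0 <= a -> 0 <= b ->
     iss_estimate Kdp Kdv l1 l2 gdp gdv a b (fun gam => 0 < gam)) /\
  (* (3) existence of suitable gains *)
  (exists a b, 0 <= a /\ 0 <= b /\ (a <> 0 \/ b <> 0) /\
     iss_estimate Kdp Kdv l1 l2 gdp gdv a b (fun gam => 0 < gam < 1)) /\
  (* (3) for such gains: asymptotic string stability *)
  (forall a b, 0 <= a -> 0 <= b -> (a <> 0 \/ b <> 0) ->
     iss_estimate Kdp Kdv l1 l2 gdp gdv a b (fun gam => 0 < gam < 1) ->
     asympt_string_stable Kdp Kdv l1 l2 gdp gdv a b).
Proof.
  destruct (gains_pos Kdp Kdv l1 l2 hKdp hKdv hl1 hl2) as [_ HB].
  pose proof (iss_estimate_of_gain Kdp Kdv l1 l2 gdp gdv hKdp hKdv hl1 hl2 hgdp hgdv) as Hiss.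
  set (B := gain_input Kdp Kdv l1 l2) in *.
  split; [| split; [| split]].
  - exact (isolated_exp_stable Kdp Kdv l1 l2 hKdp hKdv hl1 hl2).
  -
    intros a b Ha Hb.
    apply (Hiss a b (2 * B * (a * gdp + b * gdv) + 1)); [exact Ha | exact Hb | lra |].
    assert (0 <= a * gdp + b * gdv) by nra.
    pose proof (Rmult_le_pos (2 * B) _ ltac:(lra) H). lra.
  -
    exists (1 / (4 * B * gdp)), 0.
    assert (Ha : 0 < 1 / (4 * B * gdp)) by (apply Rdiv_lt_0_compat; nra).
    split; [lra | split; [lra | split; [left; lra |]]].
    apply (Hiss _ 0 (1 / 2)); [lra | lra | | lra].
    replace (2 * B * (1 / (4 * B * gdp) * gdp + 0 * gdv)) with (1 / 2) by (field; lra). lra.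
  - intros a b _ _ _. exact (asympt_string_stable_of_iss Kdp Kdv l1 l2 gdp gdv a b).
Qed.
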